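(* Let $e(m)=1$ if $m$ is even and $e(m)=0$ if $m$ is odd. For every real $\lambda$ (with the convention $\lambda^0=1$), as infinite lower triangular matrices indexed by $i,j\geq0$ (entries with $j>i$ equal to $0$): $$\Big[e(i-j)\binom{i}{j}\lambda^{i-j}\Big]^{-1}=\Big[\binom{i}{j}\lambda^{i-j}E_{i-j}\Big],$$ $$\Big[e(i-j)\binom{i}{j}\frac{\lambda^{i-j}}{i-j+1}\Big]^{-1}=\Big[\binom{i}{j}\lambda^{i-j}\sum_{k=0}^{i-j}\binom{i-j}{k}2^{k}B_{k}\Big],$$ $$\Big[\binom{2i}{2j}\lambda^{i-j}\Big]^{-1}=\Big[\binom{2i}{2j}\lambda^{i-j}E_{2(i-j)}\Big],$$ $$\Big[\binom{2i}{2j}\frac{\lambda^{i-j}}{2(i-j)+1}\Big]^{-1}=\Big[\binom{2i}{2j}\lambda^{i-j}\sum_{k=0}^{2i-2j}\binom{2i-2j}{k}2^{k}B_{k}\Big].$$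
   Context: The Euler numbers are $E_n=2^nE_n(1/2)$, where the Euler polynomials are defined by $\sum_{j\geq0}\frac{t^j}{j!}E_j(x)=\frac{2e^{xt}}{e^t+1}$ (so $\sum_n E_nt^n/n!=1/\cosh t$). The Bernoulli numbers are $B_n=B_n(0)$, where $\sum_{j\geq0}\frac{t^j}{j!}B_j(x)=\frac{te^{xt}}{e^t-1}$. For a lower triangular array $[a_{ij}]_{i,j\geq0}$ (with $a_{ij}=0$ for $j>i$) having nonzero diagonal, $[a_{ij}]^{-1}$ denotes its inverse as a lower triangular array, i.e. the array whose $(n+1)\times(n+1)$ leading truncation is the inverse of the leading truncation of $[a_{ij}]$ for every $n$. *)

From HB Require Import structures.
From mathcomp Require Import all_boot all_order all_algebra.
Set Implicit Arguments. Unset Strict Implicit. Unset Printing Implicit Defensive.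
Import Order.TTheory GRing.Theory Num.Theory.
Local Open Scope ring_scope.

(* Euler numbers E_0..E_n, characterized by the coefficient identity of
   cosh(t) * (sum_n E_n t^n/n!) = 1, i.e. E_0 = 1 and for n >= 1
   sum_{k <= n, n-k even} C(n,k) E_k = 0. *)
Fixpoint euler_seq (R : fieldType) (n : nat) : seq R :=
  match n with
  | 0 => [:: 1]
  | n'.+1 => let s := euler_seq R n' in
      rcons s (- \sum_(k < n'.+1)
                   (if odd (n'.+1 - k) then 0 else 'C(n'.+1, k)%:R * s`_k))
  end.
Definition euler_num (R : fieldType) (n : nat) : R := (euler_seq R n)`_n.

(* Bernoulli numbers B_n = B_n(0), characterized by the coefficient identity of
   (e^t - 1) * (sum_n B_n t^n/n!) = t, i.e. B_0 = 1 and for n >= 1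
   sum_{k <= n} C(n+1,k) B_k = 0  (so B_1 = -1/2). *)
Fixpoint bernoulli_seq (R : fieldType) (n : nat) : seq R :=
  match n with
  | 0 => [:: 1]
  | n'.+1 => let s := bernoulli_seq R n' in
      rcons s (- (n'.+2%:R)^-1 * \sum_(k < n'.+1) 'C(n'.+2, k)%:R * s`_k)
  end.
Definition bernoulli_num (R : fieldType) (n : nat) : R := (bernoulli_seq R n)`_n.

Definition evenind (R : fieldType) (m : nat) : R := if odd m then 0 else 1.

Definition ltrunc (R : fieldType) (a : nat -> nat -> R) (n : nat) : 'M[R]_n.+1 :=
  \matrix_(i < n.+1, j < n.+1) (if (j <= i)%N then a i j else 0).

Definition lt_inverse_of (R : fieldType) (b a : nat -> nat -> R) : Prop :=
  forall n : nat,
    ltrunc a n *m ltrunc b n = 1%:M /\ ltrunc b n *m ltrunc a n = 1%:M.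

From HB Require Import structures.
From mathcomp Require Import all_boot all_order all_algebra.
From mathcomp Require Import zify ring.
Import Order.TTheory GRing.Theory Num.Theory.
Local Open Scope ring_scope.

(* All four inversions are instances of one principle.  Call an array of
   "binomial type" if a_{ij} = c(i,j) lam^(i-j) al(i-j) for j <= i, where the
   nat kernel c satisfies c(i,i) = 1 and the trinomial revision
   c(i,k+m) c(k+m,k) = c(i,k) c(i-k,m); both c(i,j) = C(i,j) and
   c(i,j) = C(2i,2j) qualify.  The (i,k) entry of a product of two such arrays
   is c(i,k) lam^(i-k) times the c-convolution of the two sequences, so
   [b] = [a]^{-1} as soon as sum_m c(d,m) al(d-m) be(m) = [d = 0]
   ([binomial_type_inverse]).  It then remains to check four convolution
   identities: for the Euler numbers it is their defining recursion, and for
   the even kernel it is the same identity restricted to even indices.  For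
   be(m) = sum_k C(m,k) 2^k B_k (that is 2^m B_m(1/2)), multiplying the
   identity by d+1 turns it into a parity sum which, after exchanging the
   double sum, equals 2^(d+1) sum_{k<=d} C(d+1,k) B_k / 2, i.e. the defining
   recursion of the Bernoulli numbers. *)

Lemma bin_trinomial (i k m : nat) : (k + m <= i)%N ->
  ('C(i, k + m) * 'C(k + m, k) = 'C(i, k) * 'C(i - k, m))%N.
Proof.
move=> le_kmi.
apply/eqP; rewrite -(eqn_pmul2r (fact_gt0 k)) -(eqn_pmul2r (fact_gt0 m)).
rewrite -(eqn_pmul2r (fact_gt0 (i - k - m))); apply/eqP.
have Ci := bin_fact le_kmi.
have Ckm := bin_fact (leq_addr m k); rewrite addKn in Ckm.
have Cik : ('C(i, k) * (k`! * (i - k)`!) = i`!)%N by apply: bin_fact; lia.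
have Cikm : ('C(i - k, m) * (m`! * (i - k - m)`!) = (i - k)`!)%N.
  by apply: bin_fact; lia.
have sub_sub : (i - k - m = i - (k + m))%N by lia.
transitivity ('C(i, k + m) * ('C(k + m, k) * (k`! * m`!)) * (i - k - m)`!)%N.
  by rewrite !mulnA.
rewrite Ckm -mulnA sub_sub Ci -sub_sub -Cik -Cikm; ring.
Qed.

Lemma bin_double_trinomial (i k m : nat) : (k + m <= i)%N ->
  ('C(2 * i, 2 * (k + m)) * 'C(2 * (k + m), 2 * k)
   = 'C(2 * i, 2 * k) * 'C(2 * (i - k), 2 * m))%N.
Proof. by move=> le_kmi; rewrite mulnDr mulnBr bin_trinomial //; lia. Qed.

Lemma triangular_product_sum (R : fieldType) (A B : nat -> R) (n i k : nat) :
  (i <= n)%N ->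
  \sum_(j < n.+1) ((if (j <= i)%N then A j else 0) * (if (k <= j)%N then B j else 0))
  = if (k <= i)%N then \sum_(m < (i - k).+1) A (k + m) * B (k + m) else 0.
Proof.
move=> le_in; case: leqP => [le_ki | lt_ik]; last first.
  apply: big1 => j _; case: leqP => le_ji; last by rewrite mul0r.
  by rewrite (_ : (k <= j)%N = false) ?mulr0 //; lia.
rewrite -(big_mkord xpredT (fun j => (if (j <= i)%N then A j else 0) *
                                     (if (k <= j)%N then B j else 0))).
rewrite (big_cat_nat (leq0n k)) /=; last by lia.
rewrite big_nat_cond big1 ?add0r; last first.
  by move=> j /andP [/andP [_ lt_jk] _]; rewrite (_ : (k <= j)%N = false) ?mulr0 //; lia.
rewrite (big_addn 0 _ k) (big_cat_nat (leq0n (i - k).+1)) /=; last by lia.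
rewrite [X in _ + X]big_nat_cond [X in _ + X]big1 ?addr0; last first.
  move=> j /andP [/andP [lt_j _] _].
  by rewrite (_ : (j + k <= i)%N = false) ?mul0r //; lia.
rewrite big_mkord; apply: eq_bigr => j _; have := ltn_ord j => lt_j.
rewrite (_ : (j + k <= i)%N) 1?(_ : (k <= j + k)%N) 1?addnC //; lia.
Qed.

Lemma binomial_type_inverse (R : fieldType) (c : nat -> nat -> nat) (lam : R)
    (al be : nat -> R) (a b : nat -> nat -> R) :
  (forall i, c i i = 1%N) ->
  (forall i k m, (k + m <= i)%N -> (c i (k + m) * c (k + m) k = c i k * c (i - k) m)%N) ->
  (forall i j, (j <= i)%N -> a i j = (c i j)%:R * lam ^+ (i - j)%N * al (i - j)%N) ->
  (forall i j, (j <= i)%N -> b i j = (c i j)%:R * lam ^+ (i - j)%N * be (i - j)%N) ->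
  (forall d, \sum_(m < d.+1) (c d m)%:R * al (d - m)%N * be m = (d == 0)%:R) ->
  lt_inverse_of b a.
Proof.
move=> c_diag c_rev a_def b_def conv n.
suff ab1 : ltrunc a n *m ltrunc b n = 1%:M by split => //; apply: mulmx1C.
apply/matrixP => i k; rewrite !mxE.
under eq_bigr => j _ do rewrite !mxE.
have le_in : (i <= n)%N by rewrite -ltnS.
rewrite (triangular_product_sum _ (fun j => a i j) (fun j => b j k)) //.
case: leqP => [le_ki | lt_ik]; last first.
  by rewrite (_ : (i == k) = false) //; apply/negbTE; rewrite -val_eqE /=; lia.
have entry_sum : \sum_(m < (i - k).+1) a i (k + m)%N * b (k + m)%N k
    = (c i k)%:R * lam ^+ (i - k)%N *
      \sum_(m < (i - k).+1) (c (i - k)%N m)%:R * al (i - k - m)%N * be m.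
  rewrite mulr_sumr; apply: eq_bigr => m _; have := ltn_ord m => lt_m.
  rewrite a_def ?b_def; [|lia|lia].
  rewrite addKn (_ : (i - (k + m) = i - k - m)%N); last by lia.
  have c_prod : (c i (k + m)%N)%:R * (c (k + m)%N k)%:R
                = (c i k)%:R * (c (i - k)%N m)%:R :> R.
    by rewrite -!natrM c_rev //; lia.
  have -> : lam ^+ (i - k)%N = lam ^+ (i - k - m)%N * lam ^+ m.
    by rewrite -exprD; congr (_ ^+ _); lia.
  transitivity ((c i (k + m)%N)%:R * (c (k + m)%N k)%:R *
     (lam ^+ (i - k - m)%N * lam ^+ m * al (i - k - m)%N * be m)); first ring.
  rewrite c_prod; ring.
rewrite entry_sum conv; case: (eqVneq i k) => [-> | ne_ik].
  by rewrite subnn c_diag /= !mulr1.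
rewrite (_ : (i - k == 0)%N = false) ?mulr0 //.
by apply/negbTE; move: ne_ik; rewrite -val_eqE /=; lia.
Qed.

Arguments binomial_type_inverse {R c lam al be a b}.

Lemma rcons_chain_nth (T : Type) (x0 : T) (s : nat -> seq T) :
  size (s 0%N) = 1%N -> (forall n, exists y, s n.+1 = rcons (s n) y) ->
  (forall n, size (s n) = n.+1) /\
  (forall n k, (k <= n)%N -> nth x0 (s n) k = nth x0 (s k) k).
Proof.
move=> size0 step.
have sizeS n : size (s n) = n.+1.
  by elim: n => // n IH; have [y ->] := step n; rewrite size_rcons IH.
split=> // n k; elim: n => [|n IH] le_kn; first by move: le_kn; rewrite leqn0 => /eqP ->.
case: (ltngtP k n.+1) => [lt_kn | | -> //]; last by lia.
by have [y ->] := step n; rewrite nth_rcons sizeS lt_kn IH.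
Qed.

Lemma euler_num_rec (R : fieldType) n :
  euler_num R n.+1 = - \sum_(k < n.+1)
     (if odd (n.+1 - k) then 0 else 'C(n.+1, k)%:R * euler_num R k).
Proof.
have [size_s nth_s] := @rcons_chain_nth R 0 (euler_seq R) erefl
  (fun n => ex_intro _ _ erefl).
rewrite /euler_num /= nth_rcons size_s ltnn eqxx; congr (- _).
by apply: eq_bigr => k _; rewrite nth_s // -ltnS.
Qed.

Lemma euler_convolution (R : fieldType) d :
  \sum_(m < d.+1) 'C(d, m)%:R * evenind R (d - m) * euler_num R m = (d == 0)%:R.
Proof.
case: d => [|n]; first by rewrite big_ord1 /= /evenind /euler_num /= !mul1r.
rewrite big_ord_recr /= euler_num_rec subnn binn /evenind /= !mul1r.
apply/eqP; rewrite addr_eq0 opprK; apply/eqP.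
by apply: eq_bigr => k _; case: ifP => _; rewrite ?mulr0 ?mul0r ?mulr1.
Qed.

Lemma sum_even_indices (R : fieldType) (f : nat -> R) d :
  (forall k, (k <= 2 * d)%N -> odd k -> f k = 0) ->
  \sum_(k < (2 * d).+1) f k = \sum_(m < d.+1) f (2 * m)%N.
Proof.
elim: d => [|d IH] f_odd; first by rewrite !big_ord1.
rewrite [RHS]big_ord_recr /= -IH; last by move=> k le_k; apply: f_odd; lia.
rewrite (_ : (2 * d.+1).+1 = (2 * d).+3)%N; last by lia.
rewrite !big_ord_recr /= (f_odd (2 * d).+1) ?addr0; [|lia|by rewrite /= oddM].
by congr (_ + f _); lia.
Qed.

Lemma euler_even_convolution (R : fieldType) d :
  \sum_(m < d.+1) 'C(2 * d, 2 * m)%:R * 1 * euler_num R (2 * m) = (d == 0)%:R.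
Proof.
have := euler_convolution R (2 * d).
rewrite (_ : (2 * d == 0) = (d == 0))%N; last by lia.
move=> <-; rewrite (sum_even_indices _ (fun m =>
  'C(2 * d, m)%:R * evenind R (2 * d - m)%N * euler_num R m)) => [|k le_k odd_k].
  by apply: eq_bigr => m _; rewrite /evenind -mulnBr oddM.
by rewrite /evenind oddB // oddM odd_k /= mulr0 mul0r.
Qed.

Lemma bernoulli_num_rec (R : numFieldType) n :
  \sum_(k < n.+2) 'C(n.+2, k)%:R * bernoulli_num R k = 0.
Proof.
have [size_s nth_s] := @rcons_chain_nth R 0 (bernoulli_seq R) erefl
  (fun n => ex_intro _ _ erefl).
rewrite big_ord_recr /= {2}/bernoulli_num /= nth_rcons size_s ltnn eqxx.
set S := \sum_(k < n.+1) _.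
have -> : \sum_(k < n.+1) 'C(n.+2, k)%:R * (bernoulli_seq R n)`_k = S.
  by apply: eq_bigr => k _; rewrite nth_s // -ltnS.
by rewrite binSn mulNr mulrN mulrA mulfV ?mul1r ?subrr // pnatr_eq0.
Qed.

Lemma sum_triangle_exchange (R : fieldType) (F : nat -> nat -> R) N :
  \sum_(m < N.+1) \sum_(k < m.+1) F m k
  = \sum_(k < N.+1) \sum_(l < (N - k).+1) F (k + l)%N k.
Proof.
elim: N => [|N IH]; first by rewrite !big_ord1.
rewrite big_ord_recr /= IH [RHS]big_ord_recr /= subnn big_ord1 addn0.
rewrite [X in _ = X + _](eq_bigr (fun k : 'I_N.+1 =>
   \sum_(l < (N - k).+1) F (k + l)%N k + F N.+1 k)); last first.
  move=> k _; have := ltn_ord k => lt_k.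
  by rewrite subSn // big_ord_recr /=; congr (_ + F _ _); lia.
by rewrite big_split /= -addrA; congr (_ + _); rewrite big_ord_recr.
Qed.

(* Twice the number of subsets of odd co-size: 2 sum_l C(r,l) [r-l odd]
   = (1+1)^r - (1-1)^r = 2^r - [r = 0]. *)
Lemma binomial_odd_sum (R : fieldType) r :
  (\sum_(l < r.+1) 'C(r, l)%:R * (odd (r - l))%:R) * 2 = 2 ^+ r - (r == 0)%:R :> R.
Proof.
have odd_sign x : (odd x)%:R * 2 = 1 - (-1) ^+ x :> R.
  by rewrite -signr_odd; case: (odd x); rewrite ?expr1 ?expr0 /=; ring.
have plus := exprDn (1 : R) 1 r.
have minus := exprDn (-1 : R) 1 r; rewrite addNr expr0n in minus.
rewrite mulr_suml (_ : (2 : R) = 1 + 1) // plus minus -sumrB.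
by apply: eq_bigr => l _; rewrite -mulrA odd_sign !expr1n !mulr1 -mulr_natl; ring.
Qed.

(* The sequence be(m) = sum_k C(m,k) 2^k B_k = 2^m B_m(1/2) of the Bernoulli
   inverses. *)
Definition bernoulli_half (R : fieldType) (m : nat) : R :=
  \sum_(k < m.+1) 'C(m, k)%:R * 2%:R ^+ k * bernoulli_num R k.

(* The parity convolution of [bernoulli_half] reduces, by exchanging the
   double sum and [binomial_odd_sum], to a Bernoulli recursion sum. *)
Lemma odd_convolution_bernoulli_half (R : fieldType) N :
  (\sum_(m < N.+1) 'C(N, m)%:R * (odd (N - m))%:R * bernoulli_half R m) * 2
  = 2 ^+ N * \sum_(k < N) 'C(N, k)%:R * bernoulli_num R k.
Proof.
rewrite /bernoulli_half; under eq_bigr => m _ do rewrite mulr_sumr.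
rewrite (sum_triangle_exchange _ (fun m k => 'C(N, m)%:R * (odd (N - m))%:R *
   ('C(m, k)%:R * 2%:R ^+ k * bernoulli_num R k))).
under eq_bigr => k _.
  rewrite (eq_bigr (fun l : 'I_(N - k).+1 =>
     'C(N, k)%:R * 2%:R ^+ k * bernoulli_num R k *
     ('C(N - k, l)%:R * (odd (N - k - l))%:R))); last first.
    move=> l _; have := ltn_ord l => lt_l; have := ltn_ord k => lt_k.
    rewrite (_ : (N - (k + l) = N - k - l)%N); last by lia.
    have c_prod : 'C(N, k + l)%:R * 'C(k + l, k)%:R
                  = 'C(N, k)%:R * 'C(N - k, l)%:R :> R.
      by rewrite -!natrM bin_trinomial //; lia.
    transitivity ('C(N, k + l)%:R * 'C(k + l, k)%:R *
      ((odd (N - k - l))%:R * 2%:R ^+ k * bernoulli_num R k)); first ring.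
    by rewrite c_prod; ring.
  rewrite -mulr_sumr; over.
rewrite mulr_suml; under eq_bigr => k _ do rewrite -mulrA binomial_odd_sum.
rewrite big_ord_recr /= subnn expr0 subrr mulr0 addr0 mulr_sumr.
apply: eq_bigr => k _; have := ltn_ord k => lt_k.
rewrite (_ : (N - k == 0)%N = false) ?subr0; last by lia.
have -> : (2 : R) ^+ N = 2 ^+ k * 2 ^+ (N - k).
  by rewrite -exprD; congr (_ ^+ _); lia.
ring.
Qed.

Lemma bernoulli_convolution (R : numFieldType) d :
  \sum_(m < d.+1) 'C(d, m)%:R * (evenind R (d - m) / (d - m).+1%:R) * bernoulli_half R m
  = (d == 0)%:R.
Proof.
set S := \sum_(m < d.+1) _.
have scaled : \sum_(m < d.+2) 'C(d.+1, m)%:R * (odd (d.+1 - m))%:R * bernoulli_half R m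
              = d.+1%:R * S.
  rewrite big_ord_recr /= subnn /= mulr0 mul0r addr0 /S mulr_sumr.
  apply: eq_bigr => m _; have := ltn_ord m => lt_m.
  have bin_down := mul_bin_down d.+1 m; rewrite /= in bin_down.
  rewrite [RHS]mulrA [d.+1%:R * _]mulrA -[d.+1%:R * _]natrM bin_down natrM.
  rewrite (_ : (d.+1 - m = (d - m).+1)%N) /evenind /=; last by lia.
  case: (odd (d - m)); first by rewrite !(mulr0, mul0r).
  by rewrite mulr1 mul1r [_ * 'C(_, _)%:R]mulrC mulfK ?pnatr_eq0.
have := odd_convolution_bernoulli_half R d.+1; rewrite scaled.
have two_neq0 : (2 : R) != 0 by rewrite pnatr_eq0.
case: d S scaled => [|n] S _.
  rewrite big_ord1 /= /bernoulli_num /= !mul1r expr1 => S2.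
  by apply: (mulIf two_neq0); rewrite S2 mulr1 mul1r.
rewrite (bernoulli_num_rec R n) mulr0 => /eqP.
by rewrite !mulf_eq0 (negbTE two_neq0) pnatr_eq0 orbF /= => /eqP.
Qed.

Lemma bernoulli_even_convolution (R : numFieldType) d :
  \sum_(m < d.+1) 'C(2 * d, 2 * m)%:R * ((2 * (d - m)).+1%:R)^-1 *
    bernoulli_half R (2 * m)
  = (d == 0)%:R.
Proof.
have := bernoulli_convolution R (2 * d).
rewrite (_ : (2 * d == 0) = (d == 0))%N; last by lia.
move=> <-; rewrite (sum_even_indices _ (fun m => 'C(2 * d, m)%:R *
  (evenind R (2 * d - m)%N / (2 * d - m)%N.+1%:R) * bernoulli_half R m))
  => [|k le_k odd_k].
  by apply: eq_bigr => m _; rewrite /evenind -mulnBr oddM /= mul1r.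
by rewrite /evenind oddB // oddM odd_k /= !(mul0r, mulr0).
Qed.

Theorem mainTheorem4 (R : realFieldType) (lam : R) :
  lt_inverse_of
    (fun i j => 'C(i, j)%:R * lam ^+ (i - j) * euler_num R (i - j))
    (fun i j => evenind R (i - j) * 'C(i, j)%:R * lam ^+ (i - j))
  /\
  lt_inverse_of
    (fun i j => 'C(i, j)%:R * lam ^+ (i - j) *
       \sum_(k < (i - j).+1) 'C(i - j, k)%:R * 2%:R ^+ k * bernoulli_num R k)
    (fun i j => evenind R (i - j) * 'C(i, j)%:R * lam ^+ (i - j)
                  / ((i - j).+1)%:R)
  /\
  lt_inverse_of
    (fun i j => 'C(2 * i, 2 * j)%:R * lam ^+ (i - j) * euler_num R (2 * (i - j)))
    (fun i j => 'C(2 * i, 2 * j)%:R * lam ^+ (i - j))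
  /\
  lt_inverse_of
    (fun i j => 'C(2 * i, 2 * j)%:R * lam ^+ (i - j) *
       \sum_(k < (2 * i - 2 * j).+1)
          'C(2 * i - 2 * j, k)%:R * 2%:R ^+ k * bernoulli_num R k)
    (fun i j => 'C(2 * i, 2 * j)%:R * lam ^+ (i - j) / (2 * (i - j)).+1%:R).
Proof.
split; [|split; [|split]].
- apply: (binomial_type_inverse binn bin_trinomial
           (al := evenind R) (be := euler_num R) (lam := lam)) => //.
  + by move=> i j _; ring.
  + exact: euler_convolution.
- apply: (binomial_type_inverse binn bin_trinomial
           (al := fun x => evenind R x / x.+1%:R) (be := bernoulli_half R)
           (lam := lam)) => //.
  + by move=> i j _; rewrite !mulrA; ring.
  + exact: bernoulli_convolution.
- apply: (binomial_type_inverse (c := fun i j => 'C(2 * i, 2 * j))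
           (fun i => binn _) bin_double_trinomial
           (al := fun _ => 1) (be := fun m => euler_num R (2 * m)) (lam := lam)).
  + by move=> i j _; rewrite mulr1.
  + by [].
  + exact: euler_even_convolution.
- apply: (binomial_type_inverse (c := fun i j => 'C(2 * i, 2 * j))
           (fun i => binn _) bin_double_trinomial
           (al := fun x => ((2 * x).+1%:R)^-1)
           (be := fun m => bernoulli_half R (2 * m)) (lam := lam)) => //.
  + by move=> i j _; rewrite /bernoulli_half -mulnBr.
  + exact: bernoulli_even_convolution.
Qed.
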